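(* Let $\psi:\mathbb{R}\to\mathbb{R}$ be of class $\mathcal{C}^1$ such that $\psi'(t)\to-\infty$ as $t\to-\infty$, $\psi'(t)\to+\infty$ as $t\to+\infty$, and $\psi'$ has only finitely many local extrema. Then there exist $0<\theta_0<\theta_1<\pi$ such that for every $\theta\in(0,\pi)\setminus(\theta_0,\theta_1)$, the function $\chi(t)=\psi(t)\sin\theta+t\cos\theta$ satisfies $\chi(t)\to+\infty$ as $t\to\pm\infty$ and $\chi$ has a unique local minimum. *)

From Stdlib Require Import Reals Lra List.
From Coquelicot Require Import Coquelicot.
Open Scope R_scope.

Definition is_local_min (f : R -> R) (t : R) : Prop :=
  exists d : R, 0 < d /\ forall y : R, Rabs (y - t) < d -> f t <= f y.

Definition is_local_max (f : R -> R) (t : R) : Prop :=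
  exists d : R, 0 < d /\ forall y : R, Rabs (y - t) < d -> f y <= f t.

Definition is_local_extremum (f : R -> R) (t : R) : Prop :=
  is_local_min f t \/ is_local_max f t.

Definition finitely_many_local_extrema (f : R -> R) : Prop :=
  exists l : list R, forall t : R, is_local_extremum f t -> In t l.

Definition chi (psi : R -> R) (theta : R) (t : R) : R :=
  psi t * sin theta + t * cos theta.

(** Since [psi'] runs from [-oo] to [+oo] and has finitely many local extrema, all
    its local extreme values lie in some [[-B, B]].  A continuous function with
    these limits crosses a level [c] with [|c| > B] exactly once: otherwise it
    would have to turn back, producing a local extremum with value on the far side
    of [c].  Now [chi' = sin theta * (psi' - c)] with [c = - cot theta], and
    [|cot theta| > B] as soon as [theta] is close to [0] or to [PI].  For such
    [theta], [chi] strictly decreases and then strictly increases, with slope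
    bounded away from [0] far out, which gives the limits and the unique local
    minimum. *)
From Stdlib Require Import Reals Lra List.
From Coquelicot Require Import Coquelicot.
Open Scope R_scope.

Lemma mvt_is_derive (g g' : R -> R) (a b : R) :
  (forall t, is_derive g t (g' t)) -> a < b ->
  exists xi, a < xi < b /\ g b - g a = g' xi * (b - a).
Proof.
  intros Hg Hab.
  destruct (MVT_cor2 g g' a b Hab) as [xi [E Hxi]].
  - intros t _. apply is_derive_Reals, Hg.
  - now exists xi.
Qed.

Section DeriveSign.
Variables g g' : R -> R.
Hypothesis Hg : forall t, is_derive g t (g' t).

Lemma decreasing_left_of_derive_neg (ts : R) :
  (forall t, t < ts -> g' t < 0) -> forall a b, a < b <= ts -> g b < g a.
Proof.
  intros Hneg a b [Hab Hb].
  destruct (mvt_is_derive g g' a b Hg Hab) as [xi [Hxi E]].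
  assert (g' xi < 0) by (apply Hneg; lra).
  nra.
Qed.

Lemma increasing_right_of_derive_pos (ts : R) :
  (forall t, ts < t -> 0 < g' t) -> forall a b, ts <= a < b -> g a < g b.
Proof.
  intros Hpos a b [Ha Hab].
  destruct (mvt_is_derive g g' a b Hg Hab) as [xi [Hxi E]].
  assert (0 < g' xi) by (apply Hpos; lra).
  nra.
Qed.

Lemma is_lim_p_infty_of_derive_ge (a k : R) :
  0 < k -> (forall t, a < t -> k <= g' t) -> is_lim g p_infty p_infty.
Proof.
  intros Hk Hge P [M HM].
  exists (Rmax a (a + (M - g a) / k)). intros x Hx. apply HM.
  pose proof (Rmax_l a (a + (M - g a) / k)) as Hxa.
  pose proof (Rmax_r a (a + (M - g a) / k)) as HxM.
  destruct (mvt_is_derive g g' a x Hg ltac:(lra)) as [xi [Hxi E]].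
  assert (k <= g' xi) by (apply Hge; lra).
  assert (M - g a < k * (x - a)).
  { replace (M - g a) with (k * ((M - g a) / k)) by (field; lra).
    apply Rmult_lt_compat_l; lra. }
  nra.
Qed.

Lemma is_lim_m_infty_of_derive_le (a k : R) :
  0 < k -> (forall t, t < a -> g' t <= - k) -> is_lim g m_infty p_infty.
Proof.
  intros Hk Hle P [M HM].
  exists (Rmin a (a - (M - g a) / k)). intros x Hx. apply HM.
  pose proof (Rmin_l a (a - (M - g a) / k)) as Hxa.
  pose proof (Rmin_r a (a - (M - g a) / k)) as HxM.
  destruct (mvt_is_derive g g' x a Hg ltac:(lra)) as [xi [Hxi E]].
  assert (g' xi <= - k) by (apply Hle; lra).
  assert (M - g a < k * (a - x)).
  { replace (M - g a) with (k * ((M - g a) / k)) by (field; lra).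
    apply Rmult_lt_compat_l; lra. }
  nra.
Qed.

End DeriveSign.

Lemma valley_unique_local_min (h : R -> R) (ts : R) :
  (forall a b, a < b <= ts -> h b < h a) ->
  (forall a b, ts <= a < b -> h a < h b) ->
  exists! t, is_local_min h t.
Proof.
  intros Hdec Hinc. exists ts. split.
  - exists 1. split; [lra|]. intros y _.
    destruct (Rtotal_order y ts) as [Hy|[->|Hy]].
    + left. apply Hdec; lra.
    + lra.
    + left. apply Hinc; lra.
  - intros t [d [Hd Hmin]].
    destruct (Rtotal_order t ts) as [Ht|[Ht|Ht]]; [exfalso| |exfalso]; auto.
    + set (e := Rmin d (ts - t) / 2).
      assert (0 < Rmin d (ts - t)) by (apply Rmin_pos; lra).
      pose proof (Rmin_l d (ts - t)). pose proof (Rmin_r d (ts - t)).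
      assert (h (t + e) < h t) by (apply Hdec; unfold e; lra).
      assert (h t <= h (t + e)); [|lra].
      apply Hmin. unfold e. rewrite Rabs_right; lra.
    + set (e := Rmin d (t - ts) / 2).
      assert (0 < Rmin d (t - ts)) by (apply Rmin_pos; lra).
      pose proof (Rmin_l d (t - ts)). pose proof (Rmin_r d (t - ts)).
      assert (h (t - e) < h t) by (apply Hinc; unfold e; lra).
      assert (h t <= h (t - e)); [|lra].
      apply Hmin. unfold e. rewrite Rabs_left; lra.
Qed.

Section LevelCrossing.
Variable f : R -> R.
Hypothesis Hc : forall t, continuity_pt f t.
Hypothesis Hm : forall A, exists N, forall x, x < N -> f x < A.
Hypothesis Hp : forall A, exists N, forall x, N < x -> A < f x.

Lemma attains_min_right (t : R) : exists p, t <= p /\ forall y, t <= y -> f p <= f y.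
Proof.
  destruct (Hp (f t)) as [N HN].
  destruct (continuity_ab_min f t (Rmax t N) (Rmax_l _ _) (fun c _ => Hc c))
    as [p [Hmin Hpt]].
  exists p. split; [lra|]. intros y Hy.
  pose proof (Rmax_l t N). pose proof (Rmax_r t N).
  destruct (Rle_or_lt y (Rmax t N)) as [Hyle|Hygt].
  - apply Hmin; lra.
  - assert (f t < f y) by (apply HN; lra).
    assert (f p <= f t) by (apply Hmin; lra).
    lra.
Qed.

Lemma attains_max_left (p : R) : exists q, q <= p /\ forall y, y <= p -> f y <= f q.
Proof.
  destruct (Hm (f p)) as [N HN].
  destruct (continuity_ab_maj f (Rmin p N) p (Rmin_l _ _) (fun c _ => Hc c))
    as [q [Hmax Hqp]].
  exists q. split; [lra|]. intros y Hy.
  pose proof (Rmin_l p N). pose proof (Rmin_r p N).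
  destruct (Rle_or_lt (Rmin p N) y) as [Hyge|Hylt].
  - apply Hmax; lra.
  - assert (f y < f p) by (apply HN; lra).
    assert (f p <= f q) by (apply Hmax; lra).
    lra.
Qed.

(* Let [p] minimise [f] on [[t, +oo)] and [q] maximise it on [(-oo, p]]; one of
   [q], [p], [x] is a local extremum whose value is at least [c]. *)
Lemma above_level_stays_above (c : R) :
  (forall p, is_local_extremum f p -> f p < c) ->
  forall x t, x < t -> c <= f x -> c < f t.
Proof.
  intros Hext x t Hxt Hx.
  destruct (Rlt_or_le c (f t)) as [Ht|Ht]; [exact Ht|exfalso].
  destruct (attains_min_right t) as [p [Htp Hpmin]].
  destruct (attains_max_left p) as [q [Hqp Hqmax]].
  assert (f x <= f q) by (apply Hqmax; lra).
  assert (f p <= f t) by (apply Hpmin; lra).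
  destruct (Rle_lt_or_eq_dec q p Hqp) as [Hlt|<-].
  - assert (f q < c); [|lra].
    apply Hext. right. exists (p - q). split; [lra|].
    intros y Hy. apply Hqmax. apply Rabs_def2 in Hy. lra.
  - destruct (Rle_lt_or_eq_dec t q Htp) as [Hlt|<-].
    + assert (f q < c); [|lra].
      apply Hext. left. exists (q - t). split; [lra|].
      intros y Hy. apply Hpmin. apply Rabs_def2 in Hy. lra.
    + assert (f x < c); [|lra].
      apply Hext. right. exists (t - x). split; [lra|].
      intros y Hy. apply Rabs_def2 in Hy.
      assert (f y <= f t) by (apply Hqmax; lra). lra.
Qed.

Lemma level_crossing_above_extrema (c : R) :
  (forall p, is_local_extremum f p -> f p < c) ->
  exists ts, (forall t, t < ts -> f t < c) /\ (forall t, ts < t -> c < f t).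
Proof.
  intros Hext.
  destruct (Hm c) as [N1 HN1]. destruct (Hp c) as [N2 HN2].
  set (a := Rmin N1 N2 - 1). set (b := Rmax N1 N2 + 1).
  pose proof (Rmin_l N1 N2). pose proof (Rmin_r N1 N2).
  pose proof (Rmax_l N1 N2). pose proof (Rmax_r N1 N2).
  assert (f a < c) by (apply HN1; unfold a; lra).
  assert (c < f b) by (apply HN2; unfold b; lra).
  destruct (IVT (fun t => f t - c) a b) as [z [Hz Hfz]].
  - intros t. apply continuity_pt_minus; [apply Hc|apply continuity_pt_const].
    now intros u v.
  - unfold a, b; lra.
  - lra.
  - lra.
  - exists z. split.
    + intros t Ht. destruct (Rlt_or_le (f t) c) as [Hlt|Hge]; [exact Hlt|].
      pose proof (above_level_stays_above c Hext t z Ht Hge). lra.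
    + intros t Ht. apply (above_level_stays_above c Hext z t Ht). lra.
Qed.

End LevelCrossing.

Lemma local_extremum_reflect (f : R -> R) (p : R) :
  is_local_extremum (fun t => - f (- t)) p -> is_local_extremum f (- p).
Proof.
  assert (Hdist : forall y, Rabs (- y - p) = Rabs (y - - p)).
  { intros y. rewrite <- Rabs_Ropp. f_equal. ring. }
  intros [[d [Hd Hmin]]|[d [Hd Hmax]]]; [right|left]; exists d; split; auto;
    intros y Hy; rewrite <- Hdist in Hy.
  - specialize (Hmin (- y) Hy). rewrite Ropp_involutive in Hmin. lra.
  - specialize (Hmax (- y) Hy). rewrite Ropp_involutive in Hmax. lra.
Qed.

Lemma level_crossing_below_extrema (f : R -> R) (c : R) :
  (forall t, continuity_pt f t) ->
  (forall A, exists N, forall x, x < N -> f x < A) ->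
  (forall A, exists N, forall x, N < x -> A < f x) ->
  (forall p, is_local_extremum f p -> c < f p) ->
  exists ts, (forall t, t < ts -> f t < c) /\ (forall t, ts < t -> c < f t).
Proof.
  intros Hc Hm Hp Hext.
  set (g := fun t => - f (- t)).
  assert (Hg : forall t, g (- t) = - f t) by (intros t; unfold g; now rewrite Ropp_involutive).
  destruct (level_crossing_above_extrema g) with (c := - c) as [ts [Hl Hr]].
  - intros t. apply (continuity_pt_opp (fun t => f (- t))).
    apply (continuity_pt_comp (fun t => - t) f); [|apply Hc].
    apply continuity_pt_opp, continuity_pt_id.
  - intros A. destruct (Hp (- A)) as [N HN]. exists (- N). intros x Hx.
    specialize (HN (- x) ltac:(lra)). unfold g. lra.
  - intros A. destruct (Hm (- A)) as [N HN]. exists (- N). intros x Hx.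
    specialize (HN (- x) ltac:(lra)). unfold g. lra.
  - intros p Hgp. specialize (Hext _ (local_extremum_reflect f p Hgp)). unfold g. lra.
  - exists (- ts). split.
    + intros t Ht. specialize (Hr (- t) ltac:(lra)). rewrite Hg in Hr. lra.
    + intros t Ht. specialize (Hl (- t) ltac:(lra)). rewrite Hg in Hl. lra.
Qed.

Lemma bounded_on_list (f : R -> R) (l : list R) :
  exists B, 0 <= B /\ forall t, In t l -> Rabs (f t) <= B.
Proof.
  induction l as [|a l [B [HB H]]].
  - exists 0. split; [lra|]. intros t [].
  - exists (Rmax B (Rabs (f a))). pose proof (Rmax_l B (Rabs (f a))).
    split; [lra|]. intros t [<-|Ht]; [apply Rmax_r|].
    specialize (H t Ht). lra.
Qed.

Lemma sin_mul_le_cos_small_angle (B theta : R) :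
  0 <= B -> 0 < theta <= atan (/ (B + 1)) -> sin theta * (B + 1) <= cos theta.
Proof.
  intros HB [Hpos Hle].
  pose proof (atan_bound (/ (B + 1))) as [_ Hatan].
  assert (Hcos : 0 < cos theta) by (apply cos_gt_0; lra).
  assert (Htan : tan theta <= / (B + 1)).
  { rewrite <- (tan_atan (/ (B + 1))).
    destruct (Rle_lt_or_eq_dec _ _ Hle) as [Hlt| ->]; [left; apply tan_increasing|]; lra. }
  unfold tan in Htan.
  apply (Rmult_le_compat_r (B + 1)) in Htan; [|lra].
  rewrite Rinv_l in Htan by lra.
  replace (sin theta) with (sin theta / cos theta * cos theta) by (field; lra).
  nra.
Qed.

Lemma sin_mul_le_abs_cos_away_from_right_angle (B theta : R) :
  0 <= B -> 0 < theta < PI ->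
  ~ (atan (/ (B + 1)) < theta < PI - atan (/ (B + 1))) ->
  sin theta * (B + 1) <= Rabs (cos theta).
Proof.
  intros HB Htheta Hout.
  pose proof (atan_bound (/ (B + 1))) as [_ Hatan].
  destruct (Rle_or_lt theta (atan (/ (B + 1)))) as [Hsmall|Hbig].
  - pose proof (sin_mul_le_cos_small_angle B theta HB (conj (proj1 Htheta) Hsmall)).
    pose proof (Rle_abs (cos theta)). lra.
  - assert (PI - atan (/ (B + 1)) <= theta) by (apply Rnot_lt_le; intro; apply Hout; lra).
    pose proof (sin_mul_le_cos_small_angle B (PI - theta) HB ltac:(lra)).
    rewrite sin_PI_x, Rtrigo_facts.cos_pi_minus in *.
    pose proof (Rle_abs (- cos theta)). rewrite Rabs_Ropp in *. lra.
Qed.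

Section Chi.
Variables psi dpsi : R -> R.
Hypothesis Hderiv : forall t, is_derive psi t (dpsi t).
Hypothesis Hc : forall t, continuity_pt dpsi t.
Hypothesis Hm : forall A, exists N, forall x, x < N -> dpsi x < A.
Hypothesis Hp : forall A, exists N, forall x, N < x -> A < dpsi x.

Lemma is_derive_chi (theta t : R) :
  sin theta <> 0 ->
  is_derive (chi psi theta) t (sin theta * (dpsi t - - cos theta / sin theta)).
Proof.
  intros Hs.
  replace (sin theta * (dpsi t - - cos theta / sin theta))
    with (dpsi t * sin theta + 1 * cos theta) by (field; exact Hs).
  apply (is_derive_plus (fun t => psi t * sin theta) (fun t => t * cos theta)).
  - apply (is_derive_scal_l psi t (dpsi t) (sin theta)), Hderiv.
  - apply (is_derive_scal_l (fun t => t) t 1 (cos theta)), (is_derive_id (K := R_AbsRing)).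
Qed.

Lemma chi_valley (theta ts : R) : 0 < theta < PI ->
  (forall t, t < ts -> dpsi t < - cos theta / sin theta) ->
  (forall t, ts < t -> - cos theta / sin theta < dpsi t) ->
  is_lim (chi psi theta) m_infty p_infty /\
  is_lim (chi psi theta) p_infty p_infty /\
  (exists! t, is_local_min (chi psi theta) t).
Proof.
  intros Htheta Hleft Hright.
  set (c := - cos theta / sin theta) in *.
  assert (Hs : 0 < sin theta) by (apply sin_gt_0; lra).
  set (g' := fun t => sin theta * (dpsi t - c)).
  assert (Hg : forall t, is_derive (chi psi theta) t (g' t))
    by (intros t; apply is_derive_chi; lra).
  split; [|split].
  - destruct (Hm (c - 1)) as [N HN].
    apply (is_lim_m_infty_of_derive_le _ g' Hg N (sin theta) Hs).
    intros t Ht. specialize (HN t Ht). unfold g'. nra.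
  - destruct (Hp (c + 1)) as [N HN].
    apply (is_lim_p_infty_of_derive_ge _ g' Hg N (sin theta) Hs).
    intros t Ht. specialize (HN t Ht). unfold g'. nra.
  - apply (valley_unique_local_min _ ts).
    + apply (decreasing_left_of_derive_neg _ g' Hg).
      intros t Ht. specialize (Hleft t Ht). unfold g'. nra.
    + apply (increasing_right_of_derive_pos _ g' Hg).
      intros t Ht. specialize (Hright t Ht). unfold g'. nra.
Qed.

Lemma chi_valley_away_from_right_angle (B theta : R) :
  (forall p, is_local_extremum dpsi p -> - B <= dpsi p <= B) ->
  0 < theta < PI -> sin theta * (B + 1) <= Rabs (cos theta) ->
  is_lim (chi psi theta) m_infty p_infty /\
  is_lim (chi psi theta) p_infty p_infty /\
  (exists! t, is_local_min (chi psi theta) t).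
Proof.
  intros Hext Htheta Hcos.
  assert (Hs : 0 < sin theta) by (apply sin_gt_0; lra).
  destruct (Rle_or_lt 0 (cos theta)) as [Hpos|Hneg].
  - rewrite Rabs_right in Hcos by lra.
    assert (- cos theta / sin theta <= - (B + 1))
      by (apply (Rmult_le_reg_r (sin theta)); [lra|]; field_simplify; lra).
    destruct (level_crossing_below_extrema dpsi (- cos theta / sin theta) Hc Hm Hp)
      as [ts [Hleft Hright]].
    + intros p Hp'. specialize (Hext p Hp'). lra.
    + exact (chi_valley theta ts Htheta Hleft Hright).
  - rewrite Rabs_left in Hcos by lra.
    assert (B + 1 <= - cos theta / sin theta)
      by (apply (Rmult_le_reg_r (sin theta)); [lra|]; field_simplify; lra).
    destruct (level_crossing_above_extrema dpsi Hc Hm Hp (- cos theta / sin theta))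
      as [ts [Hleft Hright]].
    + intros p Hp'. specialize (Hext p Hp'). lra.
    + exact (chi_valley theta ts Htheta Hleft Hright).
Qed.

End Chi.

Theorem lemma3p2 (psi dpsi : R -> R)
  (Hderiv : forall t : R, is_derive psi t (dpsi t))
  (Hcont : forall t : R, continuous dpsi t)
  (Hlim_m : is_lim dpsi m_infty m_infty)
  (Hlim_p : is_lim dpsi p_infty p_infty)
  (Hfin : finitely_many_local_extrema dpsi) :
  exists theta0 theta1 : R,
    0 < theta0 /\ theta0 < theta1 /\ theta1 < PI /\
    forall theta : R, 0 < theta < PI -> ~ (theta0 < theta < theta1) ->
      is_lim (chi psi theta) m_infty p_infty /\
      is_lim (chi psi theta) p_infty p_infty /\
      (exists! t : R, is_local_min (chi psi theta) t).
Proof.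
  assert (Hm : forall A, exists N, forall x, x < N -> dpsi x < A)
    by (intros A; apply (Hlim_m (fun y => y < A)); now exists A).
  assert (Hp : forall A, exists N, forall x, N < x -> A < dpsi x)
    by (intros A; apply (Hlim_p (fun y => A < y)); now exists A).
  assert (Hc : forall t, continuity_pt dpsi t)
    by (intros t; apply continuity_pt_filterlim, Hcont).
  destruct Hfin as [l Hl].
  destruct (bounded_on_list dpsi l) as [B [HB HBl]].
  assert (Hext : forall p, is_local_extremum dpsi p -> - B <= dpsi p <= B)
    by (intros p Hp'; apply Rabs_le_between, HBl, Hl, Hp').
  set (theta0 := atan (/ (B + 1))).
  assert (0 < theta0)
    by (unfold theta0; rewrite <- atan_0; apply atan_increasing, Rinv_0_lt_compat; lra).
  assert (theta0 < PI / 2) by apply atan_bound.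
  exists theta0, (PI - theta0). do 3 (split; [lra|]).
  intros theta Htheta Hout.
  apply (chi_valley_away_from_right_angle psi dpsi Hderiv Hc Hm Hp B theta Hext Htheta).
  exact (sin_mul_le_abs_cos_away_from_right_angle B theta HB Htheta Hout).
Qed.
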